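(* Let $d\ge1$ be odd. Then for every $x\in[-1+\tfrac2d,1]$ there exists a unitary $U\in U(d)$ with $\operatorname{tr}[U\overline{U}]/d=x$, and $$\max\Big\{\frac{|\operatorname{tr}U|}{d}:\ U\in U(d),\ \frac{\operatorname{tr}[U\overline U]}{d}=x\Big\}=\Big[\tfrac12\big(1-\tfrac1d\big)\big(1-\tfrac2d+x\big)\Big]^{1/2}+\frac1d.$$
   Context: $\overline{U}$ denotes the entrywise complex conjugate of $U$. *)

From HB Require Import structures.
From mathcomp Require Import all_boot all_order all_algebra.
From mathcomp Require Import reals.
From mathcomp Require Import complex.
Set Implicit Arguments. Unset Strict Implicit. Unset Printing Implicit Defensive.
Import Order.TTheory GRing.Theory Num.Theory.
Local Open Scope ring_scope.

Definition entry_conj {C : numClosedFieldType} {n : nat} (U : 'M[C]_n) : 'M[C]_n :=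
  map_mx Num.conj U.

Definition unitary {C : numClosedFieldType} {n : nat} (U : 'M[C]_n) : Prop :=
  U *m (entry_conj U)^T = 1%:M.

From HB Require Import structures.
From mathcomp Require Import all_boot all_order all_algebra.
From mathcomp Require Import reals complex.
From mathcomp Require Import ring lra.

(* For odd d the skew matrix U - U^T is singular, so some unit vector w has
   U^T w = U w.  With S = (U + U^T)/2 and P = w w^*, this gives S P = U P, hence
   tr U = tr S = tr (U P) + tr (S (1 - P)).  Cauchy-Schwarz for the Frobenius
   product bounds the first term by 1 and the second by
   sqrt ((d - 1) (|S|^2 - 1)), where |S|^2 = (d + tr (U conj(U))) / 2.
   The bound is attained by real rotations diag(1, [[c, s], [-s, c]] (x) 1_m). *)

Set Implicit Arguments. Unset Strict Implicit. Unset Printing Implicit Defensive.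
Import Order.TTheory GRing.Theory Num.Theory.
Local Open Scope ring_scope.
Local Open Scope sesquilinear_scope.

Lemma det_skew_odd (R : numDomainType) n (A : 'M[R]_n) :
  odd n -> A^T = - A -> \det A = 0.
Proof.
move=> n_odd A_skew; have : \det A = - \det A.
  by rewrite -{1}det_tr A_skew -scaleN1r detZ -signr_odd n_odd mulN1r.
by move/eqP; rewrite -subr_eq0 opprK -mulr2n mulrn_eq0 => /eqP.
Qed.

Section Frobenius.
Variable C : numClosedFieldType.

Definition frobmx m n (X Y : 'M[C]_(m, n)) := form_of_matrix Num.conj 1%:M X Y.

HB.instance Definition _ m n :=
  Bilinear.copy (@frobmx m n) (form_of_matrix Num.conj 1%:M).
HB.instance Definition _ m n :=
  Hermitian.copy (@frobmx m n) (form_of_matrix Num.conj 1%:M).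

Local Notation "''[' X , Y ]" := (frobmx X Y) : ring_scope.
Local Notation "''[' X ]" := '[X, X]%R : ring_scope.

Lemma frobmxE m n (X Y : 'M[C]_(m, n)) : '[X, Y] = \tr (X *m Y ^t*).
Proof. by rewrite /frobmx /form_of_matrix mulmx1. Qed.

Lemma frobmx_sum_norm m n (X : 'M[C]_(m, n)) : '[X] = \sum_i \sum_j `|X i j| ^+ 2.
Proof.
rewrite frobmxE; apply: eq_bigr => i _; rewrite mxE.
by apply: eq_bigr => j _; rewrite !mxE normCK.
Qed.

Fact frobmx_gt0 m n (X : 'M[C]_(m, n)) : X != 0 -> 0 < '[X].
Proof.
move=> X_neq0.
have /existsP[[i j] /= Xij_neq0] : [exists ij : 'I_m * 'I_n, X ij.1 ij.2 != 0].
  apply: contraNT X_neq0 => /existsPn X0; apply/eqP/matrixP => i j.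
  by rewrite mxE; apply/eqP/negbNE/(X0 (i, j)).
rewrite frobmx_sum_norm (bigD1 i) //= (bigD1 j) //= -addrA ltr_pwDl //.
  by rewrite exprn_gt0 ?normr_gt0.
by rewrite addr_ge0 ?sumr_ge0 // => *; rewrite ?sumr_ge0 // => *; rewrite exprn_ge0.
Qed.

HB.instance Definition _ m n := isDotProduct.Build _ _ (@frobmx m n) (@frobmx_gt0 m n).

Lemma frobmx_unitary m n (U : 'M[C]_(m, n)) : U \is unitarymx -> '[U] = m%:R.
Proof. by move=> /unitarymxP U_unitary; rewrite frobmxE U_unitary mxtrace1. Qed.

Lemma frobmx_col n (w : 'cV[C]_n) : w ^t* *m w = '[w]%:M.
Proof. by rewrite [LHS]mx11_scalar frobmxE mxtrace_mulC trace_mx11. Qed.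

Section OrthogonalProjection.
Variables (n : nat) (P : 'M[C]_n).
Hypotheses (P_herm : P ^t* = P) (P_idem : P *m P = P).

Lemma proj_compl_herm : (1%:M - P) ^t* = 1%:M - P.
Proof. by rewrite linearB /= trmx1 map_mxB map_mx1 P_herm. Qed.

Lemma proj_compl_idem : (1%:M - P) *m (1%:M - P) = 1%:M - P.
Proof. by rewrite mulmxBl mul1mx mulmxBr mulmx1 P_idem subrr subr0. Qed.

Lemma frobmx_proj m (X : 'M[C]_(m, n)) : '[X *m P, X *m (1%:M - P)] = 0.
Proof.
rewrite frobmxE trmx_mul map_mxM proj_compl_herm mulmxA -(mulmxA X P).
by rewrite mulmxBr mulmx1 P_idem subrr mulmx0 mul0mx mxtrace0.
Qed.

Lemma frobmx_split m (X : 'M[C]_(m, n)) : '[X] = '[X *m P] + '[X *m (1%:M - P)].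
Proof.
rewrite -hnormDd; last exact: frobmx_proj.
by rewrite -mulmxDr addrC subrK mulmx1.
Qed.

Lemma frobmx_proj_self : '[P] = \tr P.
Proof. by rewrite frobmxE P_herm P_idem. Qed.

Lemma trace_mulmx_proj (X : 'M[C]_n) : \tr (X *m P) = '[X *m P, P].
Proof. by rewrite frobmxE P_herm -mulmxA P_idem. Qed.

Lemma norm_trace_mulmx_proj (X : 'M[C]_n) : `|\tr (X *m P)| ^+ 2 <= '[X *m P] * \tr P.
Proof. by rewrite trace_mulmx_proj -frobmx_proj_self; exact: (CauchySchwarz _ _ _).1. Qed.

End OrthogonalProjection.
Section RankOneProjection.
Variables (n : nat) (w : 'cV[C]_n).
Hypothesis w_unit : '[w] = 1.

Lemma rank_one_proj_herm : (w *m w ^t*) ^t* = w *m w ^t*.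
Proof. by rewrite trmx_mul map_mxM trmxCK. Qed.

Lemma rank_one_proj_idem : w *m w ^t* *m (w *m w ^t*) = w *m w ^t*.
Proof. by rewrite mulmxA -(mulmxA w) frobmx_col w_unit mulmx1. Qed.

Lemma rank_one_proj_trace : \tr (w *m w ^t*) = 1.
Proof. by rewrite -frobmxE. Qed.

End RankOneProjection.

Lemma norm_le_sqrtC (x k : C) : `|x| ^+ 2 <= k -> `|x| <= sqrtC k.
Proof.
move=> le_xk; rewrite -(sqrCK (normr_ge0 x)) ler_sqrtC // nnegrE.
  exact: exprn_ge0.
exact: le_trans (exprn_ge0 _ (normr_ge0 x)) le_xk.
Qed.

Lemma norm_trace_le_sym_part n (U : 'M[C]_n) (w : 'cV[C]_n) :
    U \is unitarymx -> '[w] = 1 -> U^T *m w = U *m w ->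
  `|\tr U| <= 1 + sqrtC ((n%:R - 1) * ('[2^-1 *: (U + U^T)] - 1)).
Proof.
move=> U_unitary w_unit Uw_sym; set S := 2^-1 *: (U + U^T); set P := w *m w ^t*.
have P_herm : P ^t* = P := rank_one_proj_herm w.
have P_idem : P *m P = P := rank_one_proj_idem w_unit.
have trP : \tr P = 1 := rank_one_proj_trace w_unit.
have SP : S *m P = U *m P.
  rewrite /P !mulmxA -scalemxAl mulmxDl Uw_sym -mulr2n -scaler_nat scalerA.
  by rewrite mulVf ?pnatr_eq0 // scale1r.
have trS : \tr S = \tr U.
  by rewrite mxtraceZ mxtraceD mxtrace_tr; field.
have UP_norm : '[U *m P] = 1.
  have /unitarymxP : U^t* \is unitarymx by rewrite trmxC_unitary.
  rewrite trmxCK => UtU.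
  rewrite frobmxE trmx_mul map_mxM P_herm mxtrace_mulC mulmxA -(mulmxA P) UtU.
  by rewrite mulmx1 P_idem trP.
have UP_le : `|\tr (U *m P)| <= 1.
  rewrite -sqrtC1; apply: norm_le_sqrtC.
  by have := norm_trace_mulmx_proj P_herm P_idem U; rewrite UP_norm trP mulr1.
have SP'_le : `|\tr (S *m (1%:M - P))| <= sqrtC ((n%:R - 1) * ('[S] - 1)).
  have S_split : '[S] = '[S *m (1%:M - P)] + 1.
    by rewrite (frobmx_split P_herm P_idem S) SP UP_norm addrC.
  apply: norm_le_sqrtC; rewrite S_split addrK mulrC.
  have := norm_trace_mulmx_proj (proj_compl_herm P_herm) (proj_compl_idem P_idem) S.
  by rewrite [\tr (_ - P)]raddfB /= mxtrace1 trP.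
rewrite -trS -[S in \tr S]mulmx1 -(subrK P 1%:M) mulmxDr mxtraceD SP addrC.
exact: le_trans (ler_normD _ _) (lerD UP_le SP'_le).
Qed.

Lemma frobmx_sym_part n (U : 'M[C]_n) : U \is unitarymx ->
  '[2^-1 *: (U + U^T)] = (n%:R + \tr (U *m entry_conj U)) / 2.
Proof.
move=> U_unitary; have UT_unitary : U^T \is unitarymx by rewrite trmx_unitary.
have UUT : '[U, U^T] = \tr (U *m entry_conj U) by rewrite frobmxE trmxK.
have tr_real : (\tr (U *m entry_conj U))^* = \tr (U *m entry_conj U).
  rewrite -trace_map_mx map_mxM mxtrace_mulC; congr (\tr (_ *m _)).
  by apply/matrixP => i j; rewrite !mxE; exact: conjCK.
rewrite dnormZ dnormD /= frobmx_unitary // frobmx_unitary // UUT tr_real.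
by rewrite ger0_norm ?invr_ge0 ?ler0n //; field.
Qed.

Lemma exists_unit_mulmx_trmx_eq n (U : 'M[C]_n) :
  odd n -> exists w : 'cV[C]_n, '[w] = 1 /\ U^T *m w = U *m w.
Proof.
move=> n_odd; have /det0P[r r_neq0 rUU] : \det (U - U^T) == 0.
  by rewrite det_skew_odd // linearB /= trmxK opprB.
have w0_gt0 : 0 < '[r^T] by rewrite dnorm_gt0 trmx_eq0.
have Uw0 : U^T *m r^T = U *m r^T.
  move/(congr1 trmx): rUU; rewrite trmx_mul linearB /= trmxK trmx0 mulmxBl.
  by move/eqP; rewrite subr_eq0 => /eqP.
exists ((sqrtC '[r^T])^-1 *: r^T); split; last by rewrite -!scalemxAr Uw0.
rewrite dnormZ ger0_norm ?invr_ge0 ?sqrtC_ge0 ?dnorm_ge0 //.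
by rewrite exprVn sqrtCK mulVf // gt_eqF.
Qed.

Lemma norm_trace_unitary_odd_le n (U : 'M[C]_n) : odd n -> U \is unitarymx ->
  `|\tr U| <= 1 + sqrtC ((n%:R - 1) * ((n%:R + \tr (U *m entry_conj U)) / 2 - 1)).
Proof.
move=> n_odd U_unitary; have [w [w_unit Uw_sym]] := exists_unit_mulmx_trmx_eq U n_odd.
by rewrite -frobmx_sym_part //; exact: norm_trace_le_sym_part U_unitary w_unit Uw_sym.
Qed.

End Frobenius.

Lemma unitaryP (C : numClosedFieldType) n (U : 'M[C]_n) :
  reflect (unitary U) (U \is unitarymx).
Proof. by rewrite /unitary /entry_conj map_trmx; apply: unitarymxP. Qed.

Section RotationMatrix.
Variable R : comNzRingType.

Definition rotmx m (c s : R) : 'M[R]_(1 + (m + m)) :=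
  block_mx 1%:M 0 0 (block_mx c%:M s%:M (- s)%:M c%:M).

Lemma rotmx_orthogonal m (c s : R) :
  c ^+ 2 + s ^+ 2 = 1 -> rotmx m c s *m (rotmx m c s)^T = 1%:M.
Proof.
move=> cs1; rewrite /rotmx !tr_block_mx !tr_scalar_mx !trmx0 !mulmx_block.
rewrite !mulmx0 !mul0mx !mulmx1 !addr0 !add0r -!scalar_mxM -!raddfD /=.
rewrite [RHS]scalar_mx_block; congr block_mx.
rewrite [RHS]scalar_mx_block -(raddf0 (@scalar_mx R m)).
by congr block_mx; congr scalar_mx; rewrite -?cs1; ring.
Qed.

Lemma mxtrace_rotmx m (c s : R) : \tr (rotmx m c s) = 1 + (m + m)%:R * c.
Proof.
by rewrite /rotmx !mxtrace_block !mxtrace_scalar -mulr_natr natrD; ring.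
Qed.

Lemma mxtrace_rotmx_sqr m (c s : R) :
  \tr (rotmx m c s *m rotmx m c s) = 1 + (m + m)%:R * (c ^+ 2 - s ^+ 2).
Proof.
rewrite /rotmx !mulmx_block !mulmx0 !mul0mx !mulmx1 !addr0 !add0r -!scalar_mxM.
by rewrite !mxtrace_block -!raddfD /= !mxtrace_scalar -mulr_natr natrD; ring.
Qed.

End RotationMatrix.

Section RealUnitary.
Variable R : rcfType.
Local Open Scope complex_scope.

Lemma entry_conj_realmx n (A : 'M[R]_n) :
  entry_conj (map_mx (real_complex R) A) = map_mx (real_complex R) A.
Proof. by apply/matrixP => i j; rewrite !mxE; exact: conjc_real. Qed.

Lemma unitary_realmx n (A : 'M[R]_n) :
  A *m A^T = 1%:M -> unitary (map_mx (real_complex R) A).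
Proof. by move=> A_orth; rewrite /unitary entry_conj_realmx map_trmx -map_mxM A_orth map_mx1. Qed.

Lemma mxtrace_realmx_conj n (A : 'M[R]_n) (U := map_mx (real_complex R) A) :
  \tr (U *m entry_conj U) = (\tr (A *m A))%:C.
Proof. by rewrite entry_conj_realmx -map_mxM trace_map_mx. Qed.

End RealUnitary.

Lemma radicand_ge0 (R : realFieldType) d (x : R) : (0 < d)%N ->
  -1 + 2 / d%:R <= x -> 0 <= 2^-1 * (1 - d%:R^-1) * (1 - 2 / d%:R + x).
Proof.
move=> d_gt0 x_ge; rewrite !mulr_ge0 ?invr_ge0 ?ler0n //; last by lra.
by rewrite subr_ge0 invf_le1 ?ltr0n // ler1n.
Qed.

Lemma rotation_cosine (R : rcfType) m (x : R) (d := (1 + (m + m))%N) :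
    -1 + 2 / d%:R <= x <= 1 ->
  exists c : R, [/\ c ^+ 2 <= 1,
    (m + m)%:R * c = d%:R * Num.sqrt (2^-1 * (1 - d%:R^-1) * (1 - 2 / d%:R + x))
  & (m + m)%:R * (c ^+ 2 - (1 - c ^+ 2)) = d%:R * x - 1].
Proof.
move=> /andP[x_ge x_le]; have [m0 | m_gt0] := posnP m.
  have d1 : d%:R = 1 :> R by rewrite /d m0 !addn0.
  have x1 : x = 1 by move: x_ge; rewrite d1; lra.
  by exists 0; rewrite m0 d1 x1 invr1 subrr !(mul0r, mulr0, sqrtr0, mulr1, subrr) expr2 mul0r; split.
have D_eq : d%:R = 1 + (m + m)%:R :> R by rewrite /d natrD.
have M_gt0 : 0 < (m + m)%:R :> R by rewrite ltr0n addn_gt0 m_gt0.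
have y_ge0 := radicand_ge0 (isT : (0 < d)%N) x_ge.
set y := 2^-1 * _ * _ in y_ge0 *.
pose c := d%:R * Num.sqrt y / (m + m)%:R.
have c2 : c ^+ 2 = (d%:R - 2 + d%:R * x) / (2 * (m + m)%:R).
  rewrite /c !exprMn sqr_sqrtr // /y D_eq; field.
  by apply/andP; split; rewrite gt_eqF //; lra.
exists c; split.
- have xd : x * d%:R <= 1 * d%:R by rewrite ler_wpM2r.
  by rewrite c2 ler_pdivrMr ?mulr_gt0 // mul1r; move: xd; rewrite D_eq; nra.
- by rewrite /c mulrC divfK ?gt_eqF.
- by rewrite c2 D_eq; field; rewrite -natrD gt_eqF.
Qed.

Section Extremal.
Variable R : rcfType.
Local Open Scope complex_scope.

Lemma exists_unitary_extremal d (x : R) :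
    odd d -> -1 + 2 / d%:R <= x <= 1 ->
  exists U : 'M[R[i]]_d, [/\ unitary U, \tr (U *m entry_conj U) / d%:R = x%:C
    & `|\tr U| / d%:R = (Num.sqrt (2^-1 * (1 - d%:R^-1) * (1 - 2 / d%:R + x)) + d%:R^-1)%:C].
Proof.
move=> d_odd x_range; have [m d_eq] : exists m, d = (1 + (m + m))%N.
  by exists d./2; rewrite addnn -[LHS]odd_double_half d_odd.
subst d; have [c [c2_le1 Mc Mc2]] := rotation_cosine x_range.
have D_neq0 : (1 + (m + m))%:R != 0 :> R by rewrite pnatr_eq0.
set s := Num.sqrt (1 - c ^+ 2).
have s2 : s ^+ 2 = 1 - c ^+ 2 by rewrite sqr_sqrtr // subr_ge0.
exists (map_mx (real_complex R) (rotmx m c s)); split.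
- by apply/unitary_realmx/rotmx_orthogonal; rewrite s2 addrC subrK.
- rewrite mxtrace_realmx_conj mxtrace_rotmx_sqr s2 Mc2 -(rmorph_nat (real_complex R)).
  by rewrite -fmorph_div addrC subrK mulrC mulKf.
- rewrite trace_map_mx mxtrace_rotmx Mc ger0_norm; last first.
    by rewrite ler0c addr_ge0 ?mulr_ge0 ?ler0n ?sqrtr_ge0.
  rewrite -(rmorph_nat (real_complex R)) -fmorph_div; congr (_%:C); field.
  by move: D_neq0; rewrite !natrD.
Qed.

Lemma norm_trace_unitary_odd_le_real d (x : R) (U : 'M[R[i]]_d) :
    odd d -> -1 + 2 / d%:R <= x -> unitary U -> \tr (U *m entry_conj U) / d%:R = x%:C ->
  `|\tr U| / d%:R <= (Num.sqrt (2^-1 * (1 - d%:R^-1) * (1 - 2 / d%:R + x)) + d%:R^-1)%:C.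
Proof.
move=> d_odd x_ge /unitaryP U_unitary trUU.
have d_gt0 : (0 < d)%N by rewrite odd_gt0.
have dC_neq0 : d%:R != 0 :> R[i] by rewrite pnatr_eq0 -lt0n.
have y_ge0 := radicand_ge0 d_gt0 x_ge.
set y := 2^-1 * _ * _ in y_ge0 *.
have trUU' : \tr (U *m entry_conj U) = (d%:R * x)%:C.
  by rewrite -(divfK dC_neq0 (\tr _)) trUU rmorphM rmorph_nat mulrC.
have := norm_trace_unitary_odd_le d_odd U_unitary; rewrite trUU'.
have -> : (d%:R - 1) * ((d%:R + (d%:R * x)%:C) / 2 - 1) = ((d%:R * Num.sqrt y)%:C) ^+ 2.
  rewrite -rmorphXn exprMn sqr_sqrtr // /y.
  rewrite !(rmorphM, rmorphB, rmorphD, rmorph1, fmorphV, rmorph_nat); field.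
  by rewrite pnatr_eq0 -lt0n.
rewrite sqrCK ?ler0c ?mulr_ge0 ?ler0n ?sqrtr_ge0 // ler_pdivrMr ?ltr0n //.
suff -> : (Num.sqrt y + d%:R^-1)%:C * d%:R = 1 + (d%:R * Num.sqrt y)%:C by [].
rewrite !(rmorphM, rmorphD, fmorphV, rmorph_nat); field.
by rewrite pnatr_eq0 -lt0n.
Qed.

End Extremal.

Theorem proposition5 (R : realType) (d : nat) :
  (1 <= d)%N -> odd d ->
  forall x : R, -1 + 2 / d%:R <= x <= 1 ->
  let v : R := Num.sqrt (2^-1 * (1 - d%:R^-1) * (1 - 2 / d%:R + x)) + d%:R^-1 in
  (exists U : 'M[R[i]]_d, unitary U /\ \tr (U *m entry_conj U) / d%:R = x%:C%C) /\
  (exists U : 'M[R[i]]_d, [/\ unitary U, \tr (U *m entry_conj U) / d%:R = x%:C%C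
                            & `|\tr U| / d%:R = v%:C%C]) /\
  (forall U : 'M[R[i]]_d, unitary U -> \tr (U *m entry_conj U) / d%:R = x%:C%C ->
                            `|\tr U| / d%:R <= v%:C%C).
Proof.
move=> _ d_odd x x_range v.
have [U [U_unitary trUU trU]] := exists_unitary_extremal d_odd x_range.
split; first by exists U.
split; first by exists U.
move: x_range => /andP[x_ge _] V V_unitary trVV.
exact: norm_trace_unitary_odd_le_real d_odd x_ge V_unitary trVV.
Qed.
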